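(* Let $n\ge1$ and let $\mathcal{G}=(\mathcal{V},\mathcal{E})$ be the multigraph with vertex set $\mathcal{V}=\{0,\ldots,n\}$ and, for each $i\in\{1,\dots,n\}$, exactly two parallel edges $e_i^{(0)},e_i^{(1)}$ between vertices $i-1$ and $i$ (and no other edges). Let $\epsilon,\delta\ge0$ and $\alpha\ge0$, and let $\mathcal{A}$ be an algorithm that is $(\epsilon,\delta)$-differentially private on $\mathcal{G}$ and that on every input edge weights $w:\mathcal{E}\to\{0,1\}$ produces a path from $s=0$ to $t=n$ with expected approximation error at most $\alpha$. Then there exists a $(2\epsilon,(1+e^{\epsilon})\delta)$-differentially private algorithm $\mathcal{B}$ which on every input $x\in\{0,1\}^n$ produces $y\in\{0,1\}^n$ such that the expected Hamming distance $d_H(x,y)$ is at most $\alpha$.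
   Context: Private edge weight model: for a graph $\mathcal{G}=(\mathcal{V},\mathcal{E})$, a weight function is $w:\mathcal{E}\to\mathbb{R}^+$ (nonnegative reals). Two weight functions $w,w'$ are neighboring if $\sum_{e\in\mathcal{E}}|w(e)-w'(e)|\le 1$. A randomized algorithm $\mathcal{A}$ on weight functions is $(\epsilon,\delta)$-differentially private on $\mathcal{G}$ if for all neighboring $w,w'$ and all sets $S$ of outputs, $\Pr[\mathcal{A}(w)\in S]\le e^{\epsilon}\Pr[\mathcal{A}(w')\in S]+\delta$. The approximation error of a path $P$ from $s$ to $t$ is $w(P)-d_w(s,t)$, where $w(P)$ is the sum of the edge weights on $P$ and $d_w(s,t)$ is the minimum such weight over paths from $s$ to $t$. A randomized algorithm $\mathcal{B}$ with inputs in $\{0,1\}^n$ is $(\epsilon',\delta')$-differentially private if for all $x,x'\in\{0,1\}^n$ differing in exactly one coordinate and all sets $S$ of outputs, $\Pr[\mathcal{B}(x)\in S]\le e^{\epsilon'}\Pr[\mathcal{B}(x')\in S]+\delta'$. $d_H$ denotes Hamming distance. *)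

From HB Require Import structures.
From mathcomp Require Import all_boot all_order all_algebra.
From mathcomp Require Import all_classical reals sequences exp.
Set Implicit Arguments. Unset Strict Implicit. Unset Printing Implicit Defensive.
Import Order.TTheory GRing.Theory Num.Theory.
Local Open Scope ring_scope.
Local Open Scope classical_set_scope.

(* A randomized algorithm is modelled by its output distribution on each input.
   Outputs here range over a countable set (paths / bit strings) and every
   distribution on the relevant (finite) output sets is finitely supported. *)
Record dist (R : realType) (T : eqType) := Dist {
  dsupp : seq T;
  dmass : T -> R;
  dmass_ge0 : forall x, 0 <= dmass x;
  dsupp_uniq : uniq dsupp;
  dmass_out : forall x, x \notin dsupp -> dmass x = 0;
  dmass_sum1 : \sum_(x <- dsupp) dmass x = 1 }.

Definition Pr (R : realType) (T : eqType) (D : dist R T) (S : T -> Prop) : R :=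
  \sum_(x <- dsupp D | `[< S x >]) dmass D x.

Definition Expect (R : realType) (T : eqType) (D : dist R T) (f : T -> R) : R :=
  \sum_(x <- dsupp D) dmass D x * f x.

(* Vertices are 0..n (as nats). Edge (i, b) with i : 'I_n, b : bool is the edge
   e_{i+1}^{(b)} between vertices i and i+1. *)
Definition edge (n : nat) := ('I_n * bool)%type.

Definition connects (n : nat) (e : edge n) (u v : nat) : bool :=
  ((u == e.1) && (v == e.1.+1)) || ((u == e.1.+1) && (v == e.1)).

Definition is_path (n : nat) (s t : nat) (p : seq (edge n)) : Prop :=
  exists vs : seq nat,
    [/\ size vs = (size p).+1, nth 0%N vs 0 = s, nth 0%N vs (size p) = t,
        uniq vs &
        forall (k : nat) (e : edge n), nth None [seq Some x | x <- p] k = Some e ->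
          connects e (nth 0%N vs k) (nth 0%N vs k.+1)].

Definition pweight (R : realType) (n : nat) (w : edge n -> R) (p : seq (edge n)) : R :=
  \sum_(e <- p) w e.

Definition dist_w (R : realType) (n : nat) (w : edge n -> R) (s t : nat) : R :=
  inf [set pweight w p | p in [set p | is_path s t p]].

Definition nbr_weights (R : realType) (n : nat) (w w' : edge n -> R) : Prop :=
  \sum_(e : edge n) `|w e - w' e| <= 1.

Definition dp_graph (R : realType) (n : nat) (eps delta : R)
    (A : (edge n -> R) -> dist R (seq (edge n))) : Prop :=
  forall w w' : edge n -> R,
    (forall e, 0 <= w e) -> (forall e, 0 <= w' e) -> nbr_weights w w' ->
    forall S : seq (edge n) -> Prop,
      Pr (A w) S <= expR eps * Pr (A w') S + delta.

Definition bits (n : nat) := {ffun 'I_n -> bool}.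

Definition hamming (n : nat) (x y : bits n) : nat := #|[set i | x i != y i]|.

Definition dp_bits (R : realType) (n : nat) (eps delta : R) (T : eqType)
    (B : bits n -> dist R T) : Prop :=
  forall x x' : bits n, hamming x x' = 1%N ->
    forall S : T -> Prop, Pr (B x) S <= expR eps * Pr (B x') S + delta.

From HB Require Import structures.
From mathcomp Require Import all_boot all_order all_algebra.
From mathcomp Require Import all_classical reals sequences exp.
From mathcomp Require Import ring zify.
Import Order.TTheory GRing.Theory Num.Theory.
Local Open Scope ring_scope.
Set Implicit Arguments. Unset Strict Implicit.

(* B(x) runs A on the weights w_x with w_x(e_i^(b)) = [b != x_i] and reads off the
   bits of the returned path.  A path from 0 to n crosses every stage i, so its
   weight under w_x is at least the Hamming distance between x and its bits, while
   d_{w_x}(0, n) = 0; hence B inherits the accuracy of A.  Neighbouring x, x' differing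
   at i only are linked by the weights w_x and w_x' with the i-th stage set to 0,
   which are at l1-distance 1 from both, and two applications of the privacy of A
   give the (2 eps, (1 + e^eps) delta) bound. *)

Section DistMap.
Variables (R : realType) (T : eqType) (U : finType) (D : dist R T) (f : T -> U).

Definition dist_map_mass (y : U) : R := \sum_(p <- dsupp D | f p == y) dmass D p.

Lemma sum_dist_map_mass (g : U -> R) :
  \sum_(y <- enum U) dist_map_mass y * g y = \sum_(p <- dsupp D) dmass D p * g (f p).
Proof.
rewrite big_enum /=.
under eq_bigr do rewrite /dist_map_mass big_distrl /= big_mkcond /=.
rewrite exchange_big /=; apply: eq_bigr => p _.
rewrite (bigD1 (f p)) //= eqxx big1 ?addr0 // => y /negbTE.
by rewrite eq_sym => ->.
Qed.

Lemma dist_map_mass_ge0 y : 0 <= dist_map_mass y.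
Proof. by apply: sumr_ge0 => p _; apply: dmass_ge0. Qed.

Lemma dist_map_mass_out y : y \notin enum U -> dist_map_mass y = 0.
Proof. by rewrite mem_enum. Qed.

Lemma dist_map_mass_sum1 : \sum_(y <- enum U) dist_map_mass y = 1.
Proof.
rewrite -(dmass_sum1 D).
have := sum_dist_map_mass (fun _ => 1).
by rewrite (eq_bigr _ (fun y _ => mulr1 _)) (eq_bigr _ (fun p _ => mulr1 _)).
Qed.

Definition dist_map : dist R U :=
  Dist dist_map_mass_ge0 (enum_uniq U) dist_map_mass_out dist_map_mass_sum1.

Lemma Expect_dist_map (g : U -> R) : Expect dist_map g = Expect D (g \o f).
Proof. exact: sum_dist_map_mass. Qed.

Lemma Pr_dist_map (S : U -> Prop) : Pr dist_map S = Pr D (S \o f).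
Proof.
have ind (P : Prop) (x : R) : (if `[< P >] then x else 0) = x * `[< P >]%:R.
  by case: asboolP; rewrite ?mulr1 ?mulr0.
rewrite /Pr /= big_mkcond /=; under eq_bigr do rewrite ind.
by rewrite sum_dist_map_mass [RHS]big_mkcond; apply: eq_bigr => p _; rewrite ind.
Qed.

End DistMap.

Lemma nbr_weights_sym (R : realType) (n : nat) (w w' : edge n -> R) :
  nbr_weights w w' -> nbr_weights w' w.
Proof. by rewrite /nbr_weights; under eq_bigr do rewrite distrC. Qed.

Lemma dp_graph_group_privacy2 (R : realType) (n : nat) (eps delta : R)
    (A : (edge n -> R) -> dist R (seq (edge n))) (w1 w2 w3 : edge n -> R) S :
  0 <= eps -> dp_graph eps delta A ->
  (forall e, 0 <= w1 e) -> (forall e, 0 <= w2 e) -> (forall e, 0 <= w3 e) ->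
  nbr_weights w1 w2 -> nbr_weights w2 w3 ->
  Pr (A w1) S <= expR (2 * eps) * Pr (A w3) S + (1 + expR eps) * delta.
Proof.
move=> eps0 dpA w1_ge0 w2_ge0 w3_ge0 w12 w23.
apply: le_trans (dpA _ _ w1_ge0 w2_ge0 w12 S) _.
have -> : expR (2 * eps) * Pr (A w3) S + (1 + expR eps) * delta
        = expR eps * (expR eps * Pr (A w3) S + delta) + delta.
  by rewrite mulr2n mulrDl mul1r expRD; ring.
by rewrite lerD2r ler_wpM2l ?expR_ge0 ?dpA.
Qed.

Lemma hamming1_agree (n : nat) (x x' : bits n) :
  hamming x x' = 1%N -> exists i0, forall i, i != i0 -> x i = x' i.
Proof.
rewrite /hamming => /eqP /card1P [i0 diff_i0]; exists i0 => i.
by apply: contraNeq => xi; move: (diff_i0 i); rewrite inE unfold_in /= asboolb xi.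
Qed.

Section BitsWeights.
Variables (R : realType) (n : nat).

Definition bits_weight (x : bits n) (e : edge n) : R := (e.2 != x e.1)%:R.

Definition erase_stage (w : edge n -> R) (i0 : 'I_n) (e : edge n) : R :=
  if e.1 == i0 then 0 else w e.

Lemma bits_weight01 x e : bits_weight x e = 0 \/ bits_weight x e = 1.
Proof. by rewrite /bits_weight; case: (_ != _); [right|left]. Qed.

Lemma bits_weight_ge0 x e : 0 <= bits_weight x e.
Proof. exact: ler0n. Qed.

Lemma erase_stage_ge0 w i0 : (forall e, 0 <= w e) -> forall e, 0 <= erase_stage w i0 e.
Proof. by move=> w_ge0 e; rewrite /erase_stage; case: ifP. Qed.

Lemma sum_edge (G : edge n -> R) :
  \sum_(e : edge n) G e = \sum_(i : 'I_n) (G (i, true) + G (i, false)).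
Proof.
rewrite (eq_bigr (fun i => \sum_(b : bool) G (i, b))); last first.
  by move=> i _; rewrite big_bool.
by rewrite (pair_bigA _ (fun i b => G (i, b))); apply: eq_bigr => -[].
Qed.

Lemma nbr_erase_stage x i0 : nbr_weights (bits_weight x) (erase_stage (bits_weight x) i0).
Proof.
rewrite /nbr_weights sum_edge (bigD1 i0) //= big1 ?addr0.
  rewrite /erase_stage /bits_weight /= eqxx !subr0.
  by case: (x i0); rewrite /= normr0 normr1 ?addr0 ?add0r.
by move=> i /negbTE i_ne; rewrite /erase_stage /= i_ne !subrr normr0 addr0.
Qed.

Lemma erase_stage_agree (x x' : bits n) i0 :
  (forall i, i != i0 -> x i = x' i) ->
  erase_stage (bits_weight x) i0 = erase_stage (bits_weight x') i0.
Proof.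
move=> agree; apply: funext => e; rewrite /erase_stage.
by case: eqP => // /eqP e_ne; rewrite /bits_weight agree.
Qed.

End BitsWeights.

Lemma seq_nat_crossing (vs : seq nat) (i m : nat) :
  nth 0%N vs 0 = 0%N -> (i < nth 0%N vs m)%N ->
  exists2 k, (k < m)%N & (nth 0%N vs k <= i < nth 0%N vs k.+1)%N.
Proof.
move=> vs0; elim: m => [|m IH] i_lt; first by rewrite vs0 in i_lt.
case: (ltnP i (nth 0%N vs m)) => [/IH [k k_lt ik] | i_ge].
  by exists k => //; apply: ltnW.
by exists m; rewrite ?i_ge.
Qed.

Lemma is_path_stage (n : nat) (p : seq (edge n)) (i : 'I_n) :
  is_path 0%N n p -> exists b, (i, b) \in p.
Proof.
move=> [vs [size_vs vs0 vsn _ vs_edges]].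
have i_lt : (i < nth 0%N vs (size p))%N by rewrite vsn.
have [k k_lt /andP[vk_le vk1_gt]] := seq_nat_crossing vs0 i_lt.
set e := nth (i, false) p k.
have e_in : e \in p by apply: mem_nth.
have := vs_edges k e; rewrite (nth_map (i, false)) // => /(_ erefl).
rewrite /connects => /orP[/andP[/eqP lo /eqP hi]|/andP[/eqP lo /eqP hi]];
  rewrite lo hi in vk_le vk1_gt; last first.
  by have := leq_ltn_trans vk_le vk1_gt; rewrite ltnNge leqnSn.
exists e.2; have -> : i = e.1 by apply/val_inj/eqP; rewrite eqn_leq -ltnS vk1_gt.
by case: e e_in {lo hi vk_le vk1_gt}.
Qed.

Definition path_bits (n : nat) (p : seq (edge n)) : bits n := [ffun i => (i, true) \in p].

Lemma sum_undup_le (R : realType) (T : eqType) (s : seq T) (g : T -> R) :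
  (forall e, 0 <= g e) -> \sum_(e <- undup s) g e <= \sum_(e <- s) g e.
Proof.
move=> g_ge0; elim: s => [|a s IH] //=.
case: ifP => _; rewrite !big_cons; last by rewrite lerD2l.
by apply: le_trans IH _; rewrite lerDr.
Qed.

(* Stage i contributes 1 to the weight exactly when the path uses the edge not
   labelled x_i; if it is not the e_i^(1) edge, it must be e_i^(0). *)
Lemma hamming_path_bits_le (R : realType) (n : nat) (x : bits n) (p : seq (edge n)) :
  is_path 0%N n p -> (hamming x (path_bits p))%:R <= pweight (bits_weight R x) p.
Proof.
move=> p_path; apply: le_trans (sum_undup_le p (bits_weight_ge0 R x)).
rewrite big_uniq ?undup_uniq // big_mkcond /= sum_edge.
rewrite /hamming -sum1_card natr_sum big_mkcond /=.
apply: ler_sum => i _.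
rewrite unfold_in /= asboolb /path_bits ffunE !mem_undup /bits_weight /=.
have [b ib] := is_path_stage i p_path.
have nonneg (c : bool) (y : R) : 0 <= y -> 0 <= if c then y else 0 by case: c.
case: (x i); case T_in: ((i, true) \in p) => /=.
- by rewrite addr_ge0 ?nonneg.
- have -> : (i, false) \in p by case: b ib; rewrite ?T_in.
  by rewrite add0r.
- by rewrite lerDl nonneg.
- by rewrite add0r nonneg.
Qed.

Lemma is_path_bits (n : nat) (x : bits n) : is_path 0%N n [seq (i, x i) | i <- enum 'I_n].
Proof.
exists (iota 0 n.+1); rewrite size_map size_enum_ord size_iota !nth_iota //.
split=> //; first exact: iota_uniq.
move=> k e; rewrite -map_comp.
case: (ltnP k n) => k_lt; last by rewrite nth_default // size_map size_enum_ord.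
rewrite (nth_map (Ordinal k_lt)) ?size_enum_ord // => -[<-].
by rewrite /connects !nth_iota ?nth_enum_ord //= ?eqxx //; lia.
Qed.

Lemma dist_w_bits_weight_le0 (R : realType) (n : nat) (x : bits n) :
  dist_w (bits_weight R x) 0%N n <= 0.
Proof.
have lb : has_lbound [set pweight (bits_weight R x) p | p in [set p | is_path 0%N n p]].
  by exists 0 => _ [p _ <-]; apply: sumr_ge0 => e _; apply: bits_weight_ge0.
apply: (ge_inf lb); exists [seq (i, x i) | i <- enum 'I_n]; first exact: is_path_bits.
by rewrite /pweight big_map big1 // => i _; rewrite /bits_weight /= eqxx.
Qed.

Unset Implicit Arguments.

Theorem lemma5p2 (R : realType) (n : nat) (eps delta alpha : R)
  (A : (edge n -> R) -> dist R (seq (edge n))) :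
  (1 <= n)%N -> 0 <= eps -> 0 <= delta -> 0 <= alpha ->
  dp_graph eps delta A ->
  (forall w : edge n -> R, (forall e, w e = 0 \/ w e = 1) ->
     (forall p, p \in dsupp (A w) -> is_path 0%N n p) /\
     Expect (A w) (fun p => pweight w p - dist_w w 0%N n) <= alpha) ->
  exists B : bits n -> dist R (bits n),
    dp_bits (2 * eps) ((1 + expR eps) * delta) B /\
    forall x : bits n, Expect (B x) (fun y => (hamming x y)%:R) <= alpha.
Proof.
move=> _ eps0 _ _ dpA accA.
exists (fun x => dist_map (A (bits_weight R x)) (@path_bits n)); split.
- move=> x x' /hamming1_agree [i0 agree] S; rewrite !Pr_dist_map.
  apply: (dp_graph_group_privacy2 _ eps0 dpA (bits_weight_ge0 R x)
            (erase_stage_ge0 i0 (bits_weight_ge0 R x)) (bits_weight_ge0 R x')).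
    exact: nbr_erase_stage.
  by rewrite (erase_stage_agree R agree); apply/nbr_weights_sym/nbr_erase_stage.
- move=> x; rewrite Expect_dist_map.
  have [paths err_le] := accA _ (bits_weight01 R x).
  apply: le_trans err_le; rewrite /Expect !big_seq; apply: ler_sum => p p_in.
  rewrite ler_wpM2l ?dmass_ge0 //=.
  apply: le_trans (hamming_path_bits_le R x (paths p p_in)) _.
  by rewrite lerDl oppr_ge0 dist_w_bits_weight_le0.
Qed.
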